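(* Let $f:\mathbb{F}_{2^n}\to\mathbb{F}_{2^n}$ be APN. Then: (a) $M_1(f)+M_2(f)\geq 1$. For $n$ even, equality holds if and only if $f$ is almost-3-to-1. For $n$ odd, equality holds if and only if there is a unique element of $\mathrm{Im}(f)$ with exactly two preimages and all remaining elements of $\mathrm{Im}(f)$ have exactly three preimages. (b) $3M_1(f)+4M_2(f)+3M_3(f)\geq 2^n+2$, with equality if and only if $N(f)=3\cdot 2^n-2$ and $M_r(f)=0$ for all $r>4$; in that case $M_1(f)+M_2(f)=2M_4(f)+1$.
   Context: A map $f:\mathbb{F}_{2^n}\to\mathbb{F}_{2^n}$ is APN (almost perfect nonlinear) if for every $a\neq 0$ and every $b$, the equation $f(x+a)+f(x)=b$ has at most 2 solutions (i.e. $f$ is differentially 2-uniform). $M_r(f)$ is the number of $y$ with exactly $r$ preimages under $f$; $N(f)$ is the number of pairs $(x,y)$ with $f(x)=f(y)$. $f$ is almost-3-to-1 if there is a unique element of $\mathrm{Im}(f)$ with exactly one preimage and every other element of $\mathrm{Im}(f)$ has exactly 3 preimages. *)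

(* F_{2^n} is modelled as an arbitrary finite field F with #|F| = 2^n. *)
From HB Require Import structures.
From mathcomp Require Import all_boot all_order all_algebra all_field.
Set Implicit Arguments. Unset Strict Implicit. Unset Printing Implicit Defensive.
Import GRing.Theory.
Local Open Scope ring_scope.

Section Defs.
Variable F : finFieldType.

Definition APN (f : F -> F) : Prop :=
  forall a b : F, a != 0 -> leq #|[set x : F | f (x + a) + f x == b]| 2.

Definition npre (f : F -> F) (y : F) : nat := #|[set x : F | f x == y]|.

Definition Im (f : F -> F) : {set F} := [set f x | x in [set: F]].

Definition M (r : nat) (f : F -> F) : nat := #|[set y : F | npre f y == r]|.

Definition Npairs (f : F -> F) : nat := #|[set p : F * F | f p.1 == f p.2]|.

Definition almost_3_to_1 (f : F -> F) : Prop :=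
  exists y0 : F, [/\ y0 \in Im f, npre f y0 = 1%N &
    forall y, y \in Im f -> y != y0 -> npre f y = 3%N].
End Defs.

From mathcomp Require Import all_boot all_order all_algebra all_field.
From mathcomp Require Import zify.
Import GRing.Theory.
Set Implicit Arguments. Unset Strict Implicit. Unset Printing Implicit Defensive.

(* Write k_z = npre f z for the fibre sizes of f : F -> F.  Grouping points by
   their image gives  sum_z k_z = #|F|  and  N(f) = sum_z k_z^2.  Two pointwise
   identities in k, summed over z, turn these into
     (I3)  N(f) + 2 (M_1 + M_2)         = 3 #|F| + sum_z k_z (k_z - 3),
     (I4)  3 M_1 + 4 M_2 + 3 M_3 + N(f) = 4 #|F| + sum_z k_z (k_z - 4),
   with truncated subtraction, so that each "excess" sum is zero exactly when
   all fibres have size at most 3 (resp. 4).  For an APN map on a field of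
   characteristic 2, counting the pairs (x, x + a) shift by shift gives
   N(f) <= 3 #|F| - 2.  Both parts of the corollary follow from (I3), (I4) and
   this bound; in the equality case of (a) all fibres have size <= 3, and then
   #|F| = M_1 + 2 M_2 + 3 M_3 modulo 3 tells which of M_1, M_2 equals 1.
   The file develops, in order: fibre counting for an arbitrary map, the APN
   bound on N(f), the consequences of that bound, and the corollary. *)

Section FibreCounting.
Variables (F : finFieldType) (f : F -> F).

Lemma sum_over_fibres (w : F -> nat) : \sum_x w (f x) = \sum_z npre f z * w z.
Proof.
rewrite (partition_big f predT) //=; apply: eq_bigr => z _.
rewrite (eq_bigr (fun _ => w z)) => [|x /eqP -> //].
by rewrite sum_nat_cond_const.
Qed.

Lemma sum_npre : \sum_z npre f z = #|F|.
Proof.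
have := sum_over_fibres (fun _ => 1); rewrite sum1_card => ->.
by apply: eq_bigr => z _; rewrite muln1.
Qed.

Lemma Npairs_sum_sq : Npairs f = \sum_z npre f z * npre f z.
Proof.
rewrite -sum_over_fibres /Npairs -sum1dep_card.
rewrite -(pair_big_dep predT (fun x y => f x == f y) (fun _ _ => 1)) /=.
by apply: eq_bigr => x _; rewrite sum1dep_card; apply: eq_card => y; rewrite !inE eq_sym.
Qed.

Lemma M_sum r : M r f = \sum_z (npre f z == r : nat).
Proof.
by rewrite /M -sum1dep_card big_mkcond; apply: eq_bigr => z _; case: eqP.
Qed.

(* The pointwise identities behind (I3) and (I4): for large k they are just
   k^2 = 3k + k(k-3) and k^2 = 4k + k(k-4); for small k the truncated excess
   vanishes and the indicator terms make up the difference. *)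
Lemma weighted_identity3 k :
  k * k + 2 * ((k == 1) + (k == 2)) = 3 * k + k * (k - 3).
Proof. by case: k => [|[|[|[|k]]]] //=; nia. Qed.

Lemma weighted_identity4 k :
  3 * (k == 1) + 4 * (k == 2) + 3 * (k == 3) + k * k = 4 * k + k * (k - 4).
Proof. by case: k => [|[|[|[|k]]]] //=; nia. Qed.

Lemma fibre_identity3 :
  Npairs f + 2 * (M 1 f + M 2 f) = 3 * #|F| + \sum_z npre f z * (npre f z - 3).
Proof.
rewrite Npairs_sum_sq -sum_npre !M_sum -!big_split !big_distrr -!big_split /=.
by apply: eq_bigr => z _; exact: weighted_identity3.
Qed.

Lemma fibre_identity4 :
  3 * M 1 f + 4 * M 2 f + 3 * M 3 f + Npairs f
  = 4 * #|F| + \sum_z npre f z * (npre f z - 4).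
Proof.
rewrite Npairs_sum_sq -sum_npre !M_sum !big_distrr -!big_split /=.
by apply: eq_bigr => z _; exact: weighted_identity4.
Qed.

Lemma excess_eq0 c :
  \sum_z npre f z * (npre f z - c) = 0 <-> forall z, npre f z <= c.
Proof.
split=> [/eqP | le_c]; last by rewrite big1 // => z _; rewrite (eqP (le_c z)) muln0.
rewrite sum_nat_eq0 => /forallP excess0 z.
by have := excess0 z; rewrite muln_eq0 subn_eq0 => /orP[/eqP -> |].
Qed.

Lemma M_eq0 r : M r f = 0 <-> forall z, npre f z != r.
Proof.
rewrite /M; split=> [/eqP | no_r].
  by rewrite cards_eq0 => /eqP/setP no_r z; have := no_r z; rewrite !inE => ->.
by apply/eqP; rewrite cards_eq0; apply/eqP/setP => z; rewrite !inE (negbTE (no_r z)).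
Qed.

Lemma M_eq1 r :
  M r f = 1 <-> exists z0, npre f z0 = r /\ forall z, npre f z = r -> z = z0.
Proof.
rewrite /M; split=> [/eqP/cards1P[z0 fibres_r] | [z0 [z0_r uniq_r]]].
  have in_r z : (npre f z == r) = (z == z0) by rewrite -[z == z0]in_set1 -fibres_r inE.
  exists z0; split=> [|z /eqP]; first by apply/eqP; rewrite in_r.
  by rewrite in_r => /eqP.
apply/eqP/cards1P; exists z0; apply/setP => z; rewrite !inE.
by apply/eqP/eqP => [/uniq_r | ->].
Qed.

Lemma fibres_bounded c : (forall z, npre f z <= c) <-> (forall r, c < r -> M r f = 0).
Proof.
split=> [le_c r lt_cr | M0 z]; first by apply/M_eq0 => z; have := le_c z; lia.
by rewrite leqNgt; apply/negP => /M0/M_eq0/(_ z)/eqP.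
Qed.

Lemma mem_Im z : (z \in Im f) = (0 < npre f z).
Proof.
rewrite /Im /npre card_gt0; apply/imsetP/set0Pn => [[x _ ->] | [x]].
  by exists x; rewrite inE.
by rewrite inE => /eqP <-; exists x.
Qed.

Lemma card_small_fibres :
  (forall z, npre f z <= 3) -> #|F| = M 1 f + 2 * M 2 f + 3 * M 3 f.
Proof.
move=> le3; rewrite -sum_npre !M_sum !big_distrr -!big_split /=.
by apply: eq_bigr => z _; have := le3 z; case: (npre f z) => [|[|[|[|k]]]].
Qed.

Lemma excess3_fibres_le4 :
  (forall z, npre f z <= 4) -> \sum_z npre f z * (npre f z - 3) = 4 * M 4 f.
Proof.
move=> le4; rewrite M_sum big_distrr /=.
by apply: eq_bigr => z _; have := le4 z; case: (npre f z) => [|[|[|[|[|k]]]]].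
Qed.

Lemma exceptional_fibre_iff r s : r + s = 3 -> 0 < r -> 0 < s ->
  (exists z0, [/\ z0 \in Im f, npre f z0 = r &
                forall z, z \in Im f -> z != z0 -> npre f z = 3]) <->
  [/\ M r f = 1, M s f = 0 & forall z, npre f z <= 3].
Proof.
move=> rs3 r_gt0 s_gt0; split=> [[z0 [_ z0_r others3]] | [/M_eq1[z0 [z0_r uniq_r]] /M_eq0 no_s le3]].
  have others z : z != z0 -> npre f z = 0 \/ npre f z = 3.
    move=> ne_z0; case: (boolP (z \in Im f)) => [z_im | ]; last by rewrite mem_Im; lia.
    by right; exact: others3.
  split.
  - apply/M_eq1; exists z0; split=> // z z_r; apply/eqP; apply: contraT => /others.
    by rewrite z_r; lia.
  - apply/M_eq0 => z; case: (eqVneq z z0) => [-> | /others]; rewrite ?z0_r; lia.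
  - by move=> z; case: (eqVneq z z0) => [-> | /others]; rewrite ?z0_r; lia.
exists z0; split=> [|//|z]; first by rewrite mem_Im z0_r.
rewrite mem_Im => z_gt0 ne_z0; have := no_s z; have := le3 z.
have : npre f z != r by apply: contra ne_z0 => /eqP/uniq_r ->.
lia.
Qed.

End FibreCounting.

Section APNBound.
Variables (F : finFieldType) (f : F -> F).

Lemma Npairs_by_shift : Npairs f = \sum_a #|[set x | f (x + a)%R == f x]|.
Proof.
rewrite /Npairs -sum1dep_card.
rewrite -(pair_big_dep predT (fun x y => f x == f y) (fun _ _ => 1)) /=.
under eq_bigr => x _ do rewrite big_mkcond (reindex_inj (addrI x)) /=.
rewrite exchange_big; apply: eq_bigr => a _.
by rewrite -sum1dep_card [RHS]big_mkcond; apply: eq_bigr => x _; rewrite eq_sym.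
Qed.

(* In characteristic 2, f (x + a) = f x means f (x + a) + f x = 0, so for an
   APN map each nonzero shift contributes at most 2 collisions, while the zero
   shift contributes #|F|; hence N(f) <= #|F| + 2 (#|F| - 1). *)
Lemma APN_Npairs_bound : 2 \in [pchar F]%R -> APN f -> Npairs f + 2 <= 3 * #|F|.
Proof.
move=> char2 apn.
have shift_le2 a : a != 0%R -> #|[set x | f (x + a)%R == f x]| <= 2.
  move=> a_nz; apply: leq_trans (apn a 0%R a_nz); apply: subset_leq_card.
  by apply/subsetP => x; rewrite !inE addr_eq0 oppr_pchar2.
have shift0 : #|[set x | f (x + 0)%R == f x]| = #|F|.
  by apply: eq_card => x; rewrite !inE addr0 eqxx.
rewrite Npairs_by_shift (bigD1 0%R) //= shift0.
set S := \sum_(i | _) _.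
have S_le : S <= #|[set a : F | a != 0%R]| * 2.
  by rewrite -sum_nat_cond_const; apply: leq_sum.
have card_nonzero : #|[set a : F | a != 0%R]| = #|F|.-1.
  by rewrite -(cardsC1 (0 : F)%R); apply: eq_card => a; rewrite !inE.
have : 0 < #|F| by apply/card_gt0P; exists 0%R.
move: S_le; rewrite card_nonzero; clearbody S.
(* The goal contains two syntactically different (convertible) copies of #|F|. *)
set size_F := #|F|; clearbody size_F; lia.
Qed.

End APNBound.

Lemma expn2_mod3 n : 2 ^ n = (if odd n then 2 else 1) %[mod 3].
Proof.
elim: n => // n IH; rewrite expnS -modnMmr IH modnMmr /=.
by case: (odd n).
Qed.

Section PreimageProfile.
Variables (F : finFieldType) (f : F -> F).
Hypothesis Npairs_bound : Npairs f + 2 <= 3 * #|F|.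

(* Part (a), inequality: by (I3), 2 (M_1 + M_2) >= 3 #|F| - N(f) >= 2. *)
Lemma M12_ge1 : 1 <= M 1 f + M 2 f.
Proof. by have := fibre_identity3 f; lia. Qed.

(* Part (a), equality case: M_1 + M_2 = 1 forces the excess over 3 to vanish and
   N(f) to be extremal; the size r of the exceptional fibre is then #|F| mod 3. *)
Lemma M12_eq1_iff r s : r + s = 3 -> 0 < r -> 0 < s -> #|F| = r %[mod 3] ->
  M 1 f + M 2 f = 1 <->
  (exists z0, [/\ z0 \in Im f, npre f z0 = r &
                forall z, z \in Im f -> z != z0 -> npre f z = 3]).
Proof.
move=> rs3 r_gt0 s_gt0; rewrite (exceptional_fibre_iff f rs3) //.
have id3 := fibre_identity3 f.
have [[-> ->] | [-> ->]] : (r = 1 /\ s = 2) \/ (r = 2 /\ s = 1) by lia.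
all: move=> F_mod3; split=> [M12_1 | [M_r1 M_s0 _]]; last by lia.
all: have le3 : forall z, npre f z <= 3 by apply/excess_eq0; lia.
all: by have := card_small_fibres le3; split=> //; lia.
Qed.

(* Part (b), inequality: by (I4), the weighted count is #|F| + (3 #|F| - N(f))
   plus the excess over 4. *)
Lemma weighted_M123_ge : #|F| + 2 <= 3 * M 1 f + 4 * M 2 f + 3 * M 3 f.
Proof. by have := fibre_identity4 f; lia. Qed.

Lemma weighted_M123_eq_iff :
  3 * M 1 f + 4 * M 2 f + 3 * M 3 f = #|F| + 2 <->
  Npairs f = 3 * #|F| - 2 /\ (forall r, 4 < r -> M r f = 0).
Proof.
have id4 := fibre_identity4 f; rewrite -fibres_bounded -excess_eq0.
by split=> [weighted_eq | [Npairs_max excess0]]; [split|]; lia.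
Qed.

(* In the equality case of (b) the excess over 3 in (I3) is 4 M_4. *)
Lemma weighted_M123_eq_M4 :
  3 * M 1 f + 4 * M 2 f + 3 * M 3 f = #|F| + 2 -> M 1 f + M 2 f = 2 * M 4 f + 1.
Proof.
move=> /weighted_M123_eq_iff[Npairs_max /fibres_bounded/excess3_fibres_le4 excess3].
by have := fibre_identity3 f; lia.
Qed.

End PreimageProfile.

Theorem corollary4p1 (F : finFieldType) (n : nat) (hF : #|F| = 2 ^ n)
    (f : F -> F) (hf : APN f) :
  (* (a) *)
  [/\ (1 <= M 1 f + M 2 f),
      (~~ odd n -> (M 1 f + M 2 f = 1 <-> almost_3_to_1 f)) &
      (odd n -> (M 1 f + M 2 f = 1 <->
         exists y0 : F, [/\ y0 \in Im f, npre f y0 = 2 &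
           forall y, y \in Im f -> y != y0 -> npre f y = 3]))] /\
  (* (b) *)
  [/\ (2 ^ n + 2 <= 3 * M 1 f + 4 * M 2 f + 3 * M 3 f),
      (3 * M 1 f + 4 * M 2 f + 3 * M 3 f = 2 ^ n + 2 <->
         Npairs f = 3 * 2 ^ n - 2 /\ (forall r, 4 < r -> M r f = 0)) &
      (3 * M 1 f + 4 * M 2 f + 3 * M 3 f = 2 ^ n + 2 ->
         M 1 f + M 2 f = 2 * M 4 f + 1)].
Proof.
have bound := APN_Npairs_bound (card_finPcharP hF (isT : prime 2)) hf.
rewrite -hF; split; split.
- exact: M12_ge1.
- move=> /negbTE even_n; apply: M12_eq1_iff => //.
  by rewrite hF expn2_mod3 even_n.
- move=> odd_n; apply: M12_eq1_iff => //.
  by rewrite hF expn2_mod3 odd_n.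
- exact: weighted_M123_ge.
- exact: weighted_M123_eq_iff.
- exact: weighted_M123_eq_M4.
Qed.
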